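(* Under the hypotheses of Theorem 7 (connected $G$, edge $e=(i,j)$, $i\ne j$, $a_{ij}>0$, $v=e_i-e_j$, $\widehat A=A+a_{ij}vv^T$), let $\lambda_1\ge\lambda_2\ge\dots\ge\lambda_n$ and $\widehat\lambda_1\ge\widehat\lambda_2\ge\dots\ge\widehat\lambda_n$ be the eigenvalues of $P=D^{-1}A$ and of $\widehat P=D^{-1}\widehat A$ respectively (these are real). Then for every $\ell=1,\dots,n$, \[ \lambda_\ell\le\widehat\lambda_\ell\le\lambda_\ell+a_{ij}\big(d_i^{-1}+d_j^{-1}\big). \]
   Context: Graphs are undirected and possibly weighted on vertex set $\{1,\dots,n\}$, with symmetric nonnegative adjacency matrix $A=(a_{k\ell})$; $d=A\mathbf 1$ (all entries assumed positive), $D=\mathrm{diag}(d)$; $e_k$ is the $k$-th column of the identity and $\mathbf 1$ the all-ones vector. Note $\widehat A\mathbf 1=d$, so $D$ is also the degree matrix of $\widehat A$. *)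

From HB Require Import structures.
From mathcomp Require Import all_boot all_order all_algebra.
From mathcomp Require Import reals.
Set Implicit Arguments. Unset Strict Implicit. Unset Printing Implicit Defensive.
Import Order.TTheory GRing.Theory Num.Theory.
Local Open Scope ring_scope.

Definition degvec (R : realType) (n : nat) (A : 'M[R]_n) : 'cV[R]_n :=
  A *m const_mx 1.

Definition degmx (R : realType) (n : nat) (A : 'M[R]_n) : 'M[R]_n :=
  diag_mx (degvec A)^T.

Definition evec (R : realType) (n : nat) (k : 'I_n) : 'cV[R]_n :=
  delta_mx k 0.

Definition graph_connected (R : realType) (n : nat) (A : 'M[R]_n) : Prop :=
  forall k l : 'I_n, connect (fun x y : 'I_n => 0 < A x y) k l.

Definition eigenvalues_desc (R : realType) (n : nat) (M : 'M[R]_n)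
  (lam : 'I_n -> R) : Prop :=
  (forall k l : 'I_n, (k <= l)%N -> lam l <= lam k) /\
  char_poly M = \prod_(k < n) ('X - (lam k)%:P).

From HB Require Import structures.
From mathcomp Require Import all_boot all_order all_algebra.
From mathcomp Require Import reals complex spectral.
Set Implicit Arguments. Unset Strict Implicit. Unset Printing Implicit Defensive.
Import Order.TTheory GRing.Theory Num.Theory.
Local Open Scope ring_scope.
Local Open Scope sesquilinear_scope.

(* Scaling by T = D^(-1/2) turns P = D^-1 A and its update into the similar
   symmetric matrices S = T A T and S + a_ij w w^T with w = T (e_i - e_j), so
   that |w|^2 = 1/d_i + 1/d_j.  Both bounds then follow from Weyl's monotonicity
   principle: if x^* M x + c |x|^2 <= x^* N x for all x, then
   lambda_l(M) + c <= lambda_l(N).  Its proof intersects the span of the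
   eigenvectors of M with eigenvalue >= lambda_l(M) and the span of those of N
   with eigenvalue <= lambda_l(N); their dimensions add up to more than n, so a
   common nonzero vector compares the two forms.  The perturbation term
   a_ij |x^* w|^2 lies between 0 and a_ij |w|^2 |x|^2 by Cauchy-Schwarz.
   Eigenvectors are taken over R[i], where the spectral theorem for normal
   matrices is available. *)

Lemma char_poly_conj (R : comNzRingType) n (T U M : 'M[R]_n) :
  T *m U = 1%:M -> char_poly (T *m M *m U) = char_poly M.
Proof.
move=> TU; have polyCM (X Y : 'M[R]_n) :
    map_mx polyC (X *m Y) = map_mx polyC X *m map_mx polyC Y by exact: map_mxM.
rewrite /char_poly.
have -> : char_poly_mx (T *m M *m U) =
    map_mx polyC T *m char_poly_mx M *m map_mx polyC U.
  rewrite /char_poly_mx mulmxBr mulmxBl !polyCM; congr (_ - _).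
  by rewrite scalar_mxC -mulmxA -polyCM TU map_mx1 mulmx1.
by rewrite !det_mulmx mulrAC -det_mulmx -polyCM TU map_mx1 det1 mul1r.
Qed.

Lemma card_preim_perm_eq (I : finType) (T : eqType) (f g : I -> T) (p : pred T) :
  perm_eq [seq f k | k <- enum I] [seq g k | k <- enum I] ->
  #|[set k | p (f k)]| = #|[set k | p (g k)]|.
Proof.
have card_count (h : I -> T) :
    #|[set k | p (h k)]| = count p [seq h k | k <- enum I].
  by rewrite count_map cardsE cardE /enum_mem size_filter /= filter_predT.
by rewrite !card_count => /permP ->.
Qed.

Lemma card_level_sets_nonincr (d : Order.disp_t) (T : porderType d) n
    (f g : 'I_n -> T) (l : 'I_n) :
  (forall k m : 'I_n, (k <= m)%N -> (f m <= f k)%O) ->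
  (forall k m : 'I_n, (k <= m)%N -> (g m <= g k)%O) ->
  (n < #|[set k | (f l <= f k)%O]| + #|[set k | (g k <= g l)%O]|)%N.
Proof.
move=> f_nonincr g_nonincr.
have sub_f : [set k : 'I_n | (k <= l)%N] \subset [set k | (f l <= f k)%O].
  by apply/subsetP => k; rewrite !inE => /f_nonincr.
have sub_g : [set k : 'I_n | (l <= k)%N] \subset [set k | (g k <= g l)%O].
  by apply/subsetP => k; rewrite !inE => /g_nonincr.
apply: leq_trans (leq_add (subset_leq_card sub_f) (subset_leq_card sub_g)).
rewrite -cardsUI.
have -> : [set k : 'I_n | (k <= l)%N] :|: [set k : 'I_n | (l <= k)%N] = setT.
  by apply/setP => k; rewrite !inE leq_total.
rewrite cardsT card_ord -[X in (X < _)%N]addn0 ltn_add2l card_gt0.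
by apply/set0Pn; exists l; rewrite !inE leqnn.
Qed.

Lemma exists_nonzero_capmx (F : fieldType) m1 m2 n
    (U : 'M[F]_(m1, n)) (W : 'M[F]_(m2, n)) :
  (n < \rank U + \rank W)%N ->
  exists x : 'rV[F]_n, [/\ x != 0, (x <= U)%MS & (x <= W)%MS].
Proof.
move=> big; exists (nz_row (U :&: W)%MS).
have rk_cap : (0 < \rank (U :&: W))%N.
  have := mxrank_sum_cap U W; have := rank_leq_col (U + W)%MS => le_sum eq_sum.
  by rewrite -(ltn_add2l (\rank (U + W)%MS)) addn0 eq_sum (leq_ltn_trans le_sum big).
split; first by rewrite nz_row_eq0 -mxrank_eq0 -lt0n.
  exact: submx_trans (nz_row_sub _) (capmxSl _ _).
exact: submx_trans (nz_row_sub _) (capmxSr _ _).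
Qed.

Section Weyl.
Variable C : numClosedFieldType.
Local Notation "''[' u ]" := (dotmx u u) : ring_scope.

Definition qform n (M : 'M[C]_n) (x : 'rV[C]_n) : C := (x *m M *m x^t*) 0 0.

Lemma dotmx_qform n (x : 'rV[C]_n) : '[x] = qform 1%:M x.
Proof. by rewrite /qform mulmx1 dotmxE. Qed.

Section UnitaryRows.
Variables (n : nat) (P : 'M[C]_n).
Hypothesis P_unitary : P \is unitarymx.

Lemma qform_spectral (X : 'rV[C]_n) x :
  qform (invmx P *m diag_mx X *m P) x =
  \sum_k `|(x *m P^t*) 0 k| ^+ 2 * X 0 k.
Proof.
rewrite /qform invmx_unitary //.
have -> : x *m (P^t* *m diag_mx X *m P) *m x^t* =
    (x *m P^t*) *m diag_mx X *m (x *m P^t*)^t*.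
  by rewrite trmx_mul map_mxM trmxCK !mulmxA.
rewrite mxE; apply: eq_bigr => k _.
by rewrite mul_mx_diag !mxE normCK mulrAC.
Qed.

Definition rowsub_set (I : {set 'I_n}) : 'M[C]_(#|I|, n) :=
  rowsub (fun a : 'I_#|I| => enum_val a) P.

Lemma rank_rowsub_set I : \rank (rowsub_set I) = #|I|.
Proof.
apply: mxrank_unitary; apply/row_unitarymxP => a b.
rewrite !row_rowsub; move/row_unitarymxP: P_unitary => ->.
by rewrite inj_eq //; exact: enum_val_inj.
Qed.

Lemma qform_spectral_rowsub_set (X : 'rV[C]_n) I x : (x <= rowsub_set I)%MS ->
  qform (invmx P *m diag_mx X *m P) x =
  \sum_(k in I) `|(x *m P^t*) 0 k| ^+ 2 * X 0 k.
Proof.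
move=> /submxP [c ->]; rewrite qform_spectral // [RHS]big_mkcond.
apply: eq_bigr => k _; case: ifP => // kI.
rewrite -mulmxA mul_rowsub_mx (unitarymxP P_unitary) mxE big1 ?normr0 ?expr0n ?mul0r //.
move=> a _; rewrite !mxE; case: eqP => [ak|]; last by rewrite mulr0.
by move: kI; rewrite -ak enum_valP.
Qed.

Lemma dotmx_rowsub_set I x : (x <= rowsub_set I)%MS ->
  '[x] = \sum_(k in I) `|(x *m P^t*) 0 k| ^+ 2.
Proof.
move=> xI; rewrite dotmx_qform.
have -> : (1%:M : 'M[C]_n) = invmx P *m diag_mx (const_mx 1) *m P.
  by rewrite diag_const_mx mulmx1 mulVmx // unitarymx_unit.
rewrite (qform_spectral_rowsub_set _ xI).
by apply: eq_bigr => k _; rewrite [const_mx _ _ _]mxE mulr1.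
Qed.

Lemma qform_rowsub_set_ge (X : 'rV[C]_n) (I : {set 'I_n}) (x : 'rV[C]_n) t :
  (forall k, k \in I -> t <= X 0 k) -> (x <= rowsub_set I)%MS ->
  t * '[x] <= qform (invmx P *m diag_mx X *m P) x.
Proof.
move=> tX xI; rewrite (qform_spectral_rowsub_set _ xI) (dotmx_rowsub_set xI) mulr_sumr.
by apply: ler_sum => k kI; rewrite mulrC ler_wpM2l ?exprn_ge0 ?tX.
Qed.

Lemma qform_rowsub_set_le (X : 'rV[C]_n) (I : {set 'I_n}) (x : 'rV[C]_n) t :
  (forall k, k \in I -> X 0 k <= t) -> (x <= rowsub_set I)%MS ->
  qform (invmx P *m diag_mx X *m P) x <= t * '[x].
Proof.
move=> Xt xI; rewrite (qform_spectral_rowsub_set _ xI) (dotmx_rowsub_set xI) mulr_sumr.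
by apply: ler_sum => k kI; rewrite [t * _]mulrC ler_wpM2l ?exprn_ge0 ?Xt.
Qed.

End UnitaryRows.

Lemma perm_eq_spectral_diag n (M : 'M[C]_n) (lam : 'I_n -> C) :
  M \is normalmx -> char_poly M = \prod_(k < n) ('X - (lam k)%:P) ->
  perm_eq [seq spectral_diag M 0 k | k <- enum 'I_n] [seq lam k | k <- enum 'I_n].
Proof.
move=> /orthomx_spectralP M_spectral charM; apply: prod_XsubC_eq.
rewrite !big_map -enumT !big_enum /= -charM {2}M_spectral char_poly_conj; last first.
  exact: mulVmx (spectral_unit M).
rewrite char_poly_trig ?diag_mx_is_trig //; apply: eq_bigr => k _.
by rewrite mxE eqxx mulr1n.
Qed.

Lemma weyl_qform n (M N : 'M[C]_n) (lam mu : 'I_n -> C) (c : C) (l : 'I_n) :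
  M \is normalmx -> N \is normalmx ->
  (forall k m : 'I_n, (k <= m)%N -> lam m <= lam k) ->
  (forall k m : 'I_n, (k <= m)%N -> mu m <= mu k) ->
  char_poly M = \prod_(k < n) ('X - (lam k)%:P) ->
  char_poly N = \prod_(k < n) ('X - (mu k)%:P) ->
  (forall x, qform M x + c * '[x] <= qform N x) ->
  lam l + c <= mu l.
Proof.
move=> M_normal N_normal lam_nonincr mu_nonincr charM charN MN.
pose IM := [set k | lam l <= spectral_diag M 0 k].
pose IN := [set k | spectral_diag N 0 k <= mu l].
have dim_sum : (n < \rank (rowsub_set (spectralmx M) IM) +
                    \rank (rowsub_set (spectralmx N) IN))%N.
  rewrite !rank_rowsub_set ?spectral_unitarymx //.
  rewrite /IM /IN (card_preim_perm_eq (>= lam l) (perm_eq_spectral_diag M_normal charM)).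
  rewrite (card_preim_perm_eq (<= mu l) (perm_eq_spectral_diag N_normal charN)).
  exact: card_level_sets_nonincr.
have [x [x_neq0 xM xN]] := exists_nonzero_capmx dim_sum.
have lam_le : lam l * '[x] <= qform M x.
  rewrite [in qform M x](orthomx_spectralP M_normal).
  by apply: qform_rowsub_set_ge xM => [|k]; rewrite ?spectral_unitarymx ?inE.
have mu_ge : qform N x <= mu l * '[x].
  rewrite [in qform N x](orthomx_spectralP N_normal).
  by apply: qform_rowsub_set_le xN => [|k]; rewrite ?spectral_unitarymx ?inE.
rewrite -(ler_pM2r (dotmx_is_dotmx x_neq0)) mulrDl.
by apply: le_trans mu_ge; apply: le_trans (MN x); rewrite lerD2r.
Qed.

End Weyl.

Section RealSymmetric.
Variable R : realType.
Local Notation "x %:C" := (real_complex R x).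
Local Notation "''[' u , v ]" := (dotmx u v) : ring_scope.
Local Notation "''[' u ]" := (dotmx u u) : ring_scope.

Lemma conj_real_complex (x : R) : Num.conj x%:C = x%:C.
Proof. by apply: conj_Creal; apply/complex_realP; exists x. Qed.

Lemma trmxC_map_real_complex m k (B : 'M[R]_(m, k)) :
  (map_mx (real_complex R) B)^t* = map_mx (real_complex R) B^T.
Proof. by apply/matrixP => a b; rewrite !mxE conj_real_complex. Qed.

Lemma normalmx_map_symmetric n (S : 'M[R]_n) :
  S^T = S -> map_mx (real_complex R) S \is normalmx.
Proof. by move=> S_sym; rewrite qualifE trmxC_map_real_complex S_sym. Qed.

Lemma weyl_symmetric n (S S' : 'M[R]_n) (lam mu : 'I_n -> R) (c : R) (l : 'I_n) :
  S^T = S -> S'^T = S' -> eigenvalues_desc S lam -> eigenvalues_desc S' mu ->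
  (forall x, qform (map_mx (real_complex R) S) x + c%:C * '[x] <=
             qform (map_mx (real_complex R) S') x) ->
  lam l + c <= mu l.
Proof.
move=> S_sym S'_sym [lam_nonincr charS] [mu_nonincr charS'] SS'.
rewrite -lecR rmorphD.
apply: (weyl_qform (lam := fun k => (lam k)%:C) (mu := fun k => (mu k)%:C) l
          _ _ _ _ _ _ SS').
- exact: normalmx_map_symmetric.
- exact: normalmx_map_symmetric.
- by move=> k m /lam_nonincr; rewrite lecR.
- by move=> k m /mu_nonincr; rewrite lecR.
- by rewrite -map_char_poly charS map_prod_XsubC.
- by rewrite -map_char_poly charS' map_prod_XsubC.
Qed.

Lemma qform_rank1_update n (S : 'M[R]_n) (u : 'cV[R]_n) (a : R) (x : 'rV[R[i]]_n) :
  qform (map_mx (real_complex R) (S + a *: (u *m u^T))) x =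
  qform (map_mx (real_complex R) S) x +
    a%:C * `|'[x, (map_mx (real_complex R) u)^T]| ^+ 2.
Proof.
set y := (map_mx (real_complex R) u)^T.
have uu : map_mx (real_complex R) (u *m u^T) = y^t* *m y.
  by rewrite /y map_trmx trmxC_map_real_complex trmxK map_mxM.
rewrite map_mxD map_mxZ /qform mulmxDr mulmxDl mxE; congr (_ + _).
rewrite -scalemxAr -scalemxAl mxE uu; congr (_ * _).
have -> : x *m (y^t* *m y) *m x^t* = (x *m y^t*) *m (x *m y^t*)^t*.
  by rewrite trmx_mul map_mxM trmxCK !mulmxA.
by rewrite mxE big_ord1 dotmxE normCK !mxE.
Qed.

Lemma dnorm_map_real_complex n (u : 'cV[R]_n) :
  '[(map_mx (real_complex R) u)^T] = ((u^T *m u) 0 0)%:C.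
Proof.
by rewrite dotmxE map_trmx trmxC_map_real_complex trmxK -map_mxM mxE.
Qed.

Lemma eigenvalues_rank1_update n (S : 'M[R]_n) (u : 'cV[R]_n) (a : R)
    (lam mu : 'I_n -> R) (l : 'I_n) :
  S^T = S -> 0 <= a ->
  eigenvalues_desc S lam -> eigenvalues_desc (S + a *: (u *m u^T)) mu ->
  lam l <= mu l /\ mu l <= lam l + a * (u^T *m u) 0 0.
Proof.
move=> S_sym a_ge0 eigS eigS'.
have S'_sym : (S + a *: (u *m u^T))^T = S + a *: (u *m u^T).
  by rewrite linearD linearZ /= trmx_mul trmxK S_sym.
have a_ge0C : 0 <= a%:C by rewrite ler0c.
split.
  rewrite -[lam l]addr0; apply: weyl_symmetric eigS eigS' _ => // x.
  by rewrite qform_rank1_update rmorph0 mul0r addr0 lerDl mulr_ge0 ?exprn_ge0.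
rewrite -lerBlDr; apply: weyl_symmetric eigS' eigS _ => // x.
rewrite qform_rank1_update rmorphN mulNr -addrA gerDl subr_le0 rmorphM -mulrA.
rewrite ler_wpM2l // mulrC.
apply: le_trans (CauchySchwarz (@dotmx _ n) x (map_mx (real_complex R) u)^T).1 _.
by rewrite /= dnorm_map_real_complex.
Qed.

End RealSymmetric.

Section DiagScaling.
Variables (R : realType) (n : nat).

Lemma quad_diag_evecB (s : 'rV[R]_n) (i j : 'I_n) : i != j ->
  ((evec R i - evec R j)^T *m diag_mx s *m (evec R i - evec R j)) 0 0 =
  s 0 i + s 0 j.
Proof.
move=> ij; rewrite mxE (bigD1 i) //= (bigD1 j) 1?eq_sym //= big1 ?addr0.
  rewrite mul_mx_diag !mxE !eqxx (negbTE ij) eq_sym (negbTE ij) /=.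
  by rewrite subr0 sub0r mulNr mulrNN !mul1r !mulr1.
move=> k /andP[ki kj]; rewrite mul_mx_diag !mxE (negbTE ki) (negbTE kj) /=.
by rewrite subr0 !mul0r.
Qed.

Section PositiveDiag.
Variable d : 'rV[R]_n.
Hypothesis d_gt0 : forall k, 0 < d 0 k.

Definition diag_invsqrt : 'M[R]_n := diag_mx (map_mx (fun x => Num.sqrt x^-1) d).

Lemma diag_invsqrt_sqr :
  diag_invsqrt *m diag_invsqrt = diag_mx (map_mx GRing.inv d).
Proof.
rewrite mulmx_diag; congr diag_mx; apply/rowP => k.
by rewrite !mxE -expr2 sqr_sqrtr // invr_ge0 ltW.
Qed.

Lemma invmx_diag : invmx (diag_mx d) = diag_mx (map_mx GRing.inv d).
Proof.
have Dinv_D : diag_mx (map_mx GRing.inv d) *m diag_mx d = 1%:M.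
  rewrite mulmx_diag -diag_const_mx; congr diag_mx; apply/rowP => k.
  by rewrite !mxE mulVf ?gt_eqF.
have [_ D_unit] := mulmx1_unit Dinv_D.
by rewrite -[RHS]mulmx1 -(mulmxV D_unit) mulmxA Dinv_D mul1mx.
Qed.

Lemma char_poly_invdiag_mul (M : 'M[R]_n) :
  char_poly (invmx (diag_mx d) *m M) =
  char_poly (diag_invsqrt *m M *m diag_invsqrt).
Proof.
set T := diag_invsqrt.
have T_sqrt : T *m diag_mx (map_mx Num.sqrt d) = 1%:M.
  rewrite mulmx_diag -diag_const_mx; congr diag_mx; apply/rowP => k.
  by rewrite !mxE -sqrtrM ?invr_ge0 ?ltW // mulVf ?gt_eqF // sqrtr1.
rewrite invmx_diag -diag_invsqrt_sqr -(char_poly_conj (T *m M *m T) T_sqrt).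
by congr char_poly; rewrite !mulmxA -[RHS]mulmxA T_sqrt mulmx1.
Qed.

End PositiveDiag.
End DiagScaling.

Theorem mainTheorem5 (R : realType) (n : nat) (A : 'M[R]_n) (i j : 'I_n)
  (lam lamh : 'I_n -> R) :
  A^T = A ->
  (forall k l, 0 <= A k l) ->
  (forall k, 0 < degvec A k 0) ->
  graph_connected A ->
  i != j ->
  0 < A i j ->
  let v := evec R i - evec R j in
  let Ah := A + A i j *: (v *m v^T) in
  let d := degvec A in
  eigenvalues_desc (invmx (degmx A) *m A) lam ->
  eigenvalues_desc (invmx (degmx A) *m Ah) lamh ->
  forall l : 'I_n,
    lam l <= lamh l /\
    lamh l <= lam l + A i j * ((d i 0)^-1 + (d j 0)^-1).
Proof.
move=> A_sym _ deg_gt0 _ ij Aij_gt0 v Ah d [lam_nonincr charP] [lamh_nonincr charPh] l.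
have d_gt0 k : 0 < d^T 0 k by rewrite mxE.
pose T := diag_invsqrt d^T.
have T_sym : T^T = T by rewrite tr_diag_mx.
have S_sym : (T *m A *m T)^T = T *m A *m T by rewrite !trmx_mul T_sym A_sym mulmxA.
have eigS : eigenvalues_desc (T *m A *m T) lam.
  by split; rewrite // -char_poly_invdiag_mul.
have eigS' : eigenvalues_desc (T *m A *m T + A i j *: (T *m v *m (T *m v)^T)) lamh.
  have -> : T *m A *m T + A i j *: (T *m v *m (T *m v)^T) = T *m Ah *m T.
    by rewrite /Ah (mulmxDr T A) mulmxDl -scalemxAr -scalemxAl trmx_mul T_sym !mulmxA.
  by split; rewrite // -char_poly_invdiag_mul.
have sqnorm_Tv : ((T *m v)^T *m (T *m v)) 0 0 = (d i 0)^-1 + (d j 0)^-1.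
  rewrite trmx_mul T_sym -mulmxA (mulmxA T) diag_invsqrt_sqr // mulmxA.
  by rewrite quad_diag_evecB // !mxE.
rewrite -sqnorm_Tv; exact: eigenvalues_rank1_update l S_sym (ltW Aij_gt0) eigS eigS'.
Qed.
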